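(* The class $\mathcal{P}$ of positive MV-algebras is not closed under homomorphic images, hence is not a variety. Specifically, let $\mathbf{C}$ be the Chang MV-algebra with least positive infinitesimal $\epsilon$, and let $\mathbf{C}'$ be the subset $\{0,\epsilon,2\epsilon,\dots\}\cup\{1\}$, which is closed under $\oplus,\odot,\vee,\wedge,0,1$; the equivalence relation $\theta$ on $\mathbf{C}'$ with classes $\{0\}$, $\{n\epsilon\mid n\ge 1\}$, $\{1\}$ is a congruence of $\mathbf{C}'$, and $\mathbf{C}'/\theta$ is not a positive MV-algebra.
   Context: A \emph{positive MV-algebra} is an algebra of type $\{\oplus,\odot,\vee,\wedge,0,1\}$ isomorphic to a subalgebra of the $\{\oplus,\odot,\vee,\wedge,0,1\}$-reduct of some MV-algebra, where MV-algebras are taken with the derived operations $1=\neg 0$, $x\odot y=\neg(\neg x\oplus\neg y)$, $x\vee y=(x\odot\neg y)\oplus y$, $x\wedge y=\neg(\neg x\vee\neg y)$. The Chang algebra $\mathbf{C}$ has universe $\{n\epsilon\mid n\in\mathbb{N}\}\cup\{1-n\epsilon\mid n\in\mathbb{N}\}$, realized as $\Gamma(\mathbb{Z}\times_{\mathrm{lex}}\mathbb{Z},(1,0))$ with $\epsilon=(0,1)$. *)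

From mathcomp Require Import all_boot all_order all_algebra.
Set Implicit Arguments. Unset Strict Implicit. Unset Printing Implicit Defensive.
Import Order.TTheory GRing.Theory Num.Theory.

Record mv_sig (A : Type) := MvSig {
  mv_oplus : A -> A -> A; mv_neg : A -> A; mv_zero : A }.

Definition MV_axioms (A : Type) (s : mv_sig A) : Prop :=
  let op := mv_oplus s in let ng := mv_neg s in let z := mv_zero s in
  (forall x y w, op x (op y w) = op (op x y) w)
  /\ (forall x y, op x y = op y x)
  /\ (forall x, op x z = x)
  /\ (forall x, ng (ng x) = x)
  /\ (forall x, op x (ng z) = ng z)
  /\ (forall x y, op (ng (op (ng x) y)) y = op (ng (op (ng y) x)) x).

Record mvAlgebra := MvAlgebra {
  mv_car :> Type; mv_ops : mv_sig mv_car; mv_ax : MV_axioms mv_ops }.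

Record pos_sig (A : Type) := PosSig {
  p_oplus : A -> A -> A; p_odot : A -> A -> A;
  p_join : A -> A -> A; p_meet : A -> A -> A; p_zero : A; p_one : A }.

Definition mv_one A (s : mv_sig A) := mv_neg s (mv_zero s).
Definition mv_odot A (s : mv_sig A) x y :=
  mv_neg s (mv_oplus s (mv_neg s x) (mv_neg s y)).
Definition mv_join A (s : mv_sig A) x y := mv_oplus s (mv_odot s x (mv_neg s y)) y.
Definition mv_meet A (s : mv_sig A) x y :=
  mv_neg s (mv_join s (mv_neg s x) (mv_neg s y)).

Definition reduct A (s : mv_sig A) : pos_sig A :=
  PosSig (mv_oplus s) (mv_odot s) (mv_join s) (mv_meet s) (mv_zero s) (mv_one s).

Definition pos_hom A B (s : pos_sig A) (t : pos_sig B) (f : A -> B) : Prop :=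
  (forall x y, f (p_oplus s x y) = p_oplus t (f x) (f y))
  /\ (forall x y, f (p_odot s x y) = p_odot t (f x) (f y))
  /\ (forall x y, f (p_join s x y) = p_join t (f x) (f y))
  /\ (forall x y, f (p_meet s x y) = p_meet t (f x) (f y))
  /\ f (p_zero s) = p_zero t
  /\ f (p_one s) = p_one t.

(* positive MV-algebra: isomorphic to a subalgebra of the reduct of an MV-algebra,
   i.e. embeds injectively and homomorphically into such a reduct *)
Definition is_positive A (s : pos_sig A) : Prop :=
  exists (M : mvAlgebra) (f : A -> M), injective f /\ pos_hom s (reduct (mv_ops M)) f.

Definition pos_congruence A (s : pos_sig A) (th : A -> A -> Prop) : Prop :=
  (forall x, th x x) /\ (forall x y, th x y -> th y x)
  /\ (forall x y w, th x y -> th y w -> th x w)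
  /\ (forall x x' y y', th x x' -> th y y' -> th (p_oplus s x y) (p_oplus s x' y'))
  /\ (forall x x' y y', th x x' -> th y y' -> th (p_odot s x y) (p_odot s x' y'))
  /\ (forall x x' y y', th x x' -> th y y' -> th (p_join s x y) (p_join s x' y'))
  /\ (forall x x' y y', th x x' -> th y y' -> th (p_meet s x y) (p_meet s x' y')).

(* ---------- The Chang algebra C = Gamma(Z x_lex Z, (1,0)) ---------- *)
(* Eps n stands for n*eps = (0,n);  OneMinus n stands for 1 - n*eps = (1,-n).
   This is a bijective encoding of the interval [(0,0),(1,0)] of Z x_lex Z. *)
Inductive chang := Eps of nat | OneMinus of nat.

Local Open Scope ring_scope.

Definition chang_val (x : chang) : int * int :=
  match x with Eps n => (0, n%:Z) | OneMinus n => (1, - n%:Z) end.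

Definition lex_le (p q : int * int) : bool :=
  (p.1 < q.1) || ((p.1 == q.1) && (p.2 <= q.2)).

Definition lex_trunc (p : int * int) : int * int :=
  if lex_le (1, 0) p then (1, 0) else if lex_le p (0, 0) then (0, 0) else p.

Definition chang_of (p : int * int) : chang :=
  if p.1 == 1 then OneMinus `|p.2|%N else Eps `|p.2|%N.

Definition chang_oplus (x y : chang) : chang :=
  chang_of (lex_trunc ((chang_val x).1 + (chang_val y).1,
                        (chang_val x).2 + (chang_val y).2)).
Definition chang_neg (x : chang) : chang :=
  chang_of (1 - (chang_val x).1, 0 - (chang_val x).2).

Definition chang_sig : mv_sig chang := MvSig chang_oplus chang_neg (Eps 0).
Definition chang_pos : pos_sig chang := reduct chang_sig.

Definition in_Cp (x : chang) : bool :=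
  match x with Eps _ => true | OneMinus n => n == 0%N end.

Definition Cp := {x : chang | in_Cp x}.
Definition Cp0 : Cp := exist _ (Eps 0) isT.
Definition Cp1 : Cp := exist _ (OneMinus 0) isT.
(* restriction of the operations of C to C' (closure is asserted in the theorem) *)
Definition Cp_lift (x : chang) : Cp := insubd Cp0 x.
Definition Cp_pos : pos_sig Cp :=
  PosSig (fun x y => Cp_lift (p_oplus chang_pos (val x) (val y)))
         (fun x y => Cp_lift (p_odot chang_pos (val x) (val y)))
         (fun x y => Cp_lift (p_join chang_pos (val x) (val y)))
         (fun x y => Cp_lift (p_meet chang_pos (val x) (val y)))
         Cp0 Cp1.

Definition theta (x y : Cp) : Prop :=
  (val x = Eps 0 /\ val y = Eps 0)
  \/ (exists n m, (0 < n)%N /\ (0 < m)%N /\ val x = Eps n /\ val y = Eps m)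
  \/ (val x = OneMinus 0 /\ val y = OneMinus 0).

(* ---------- the quotient C'/theta, one element per class ---------- *)
Inductive Cq := Q0 | Qe | Q1.

Definition Cq_pi (x : Cp) : Cq :=
  match val x with Eps 0 => Q0 | Eps _ => Qe | OneMinus _ => Q1 end.

Definition Cq_rep (q : Cq) : Cp :=
  match q with Q0 => Cp0 | Qe => exist _ (Eps 1) isT | Q1 => Cp1 end.

Definition Cq_pos : pos_sig Cq :=
  PosSig (fun q r => Cq_pi (p_oplus Cp_pos (Cq_rep q) (Cq_rep r)))
         (fun q r => Cq_pi (p_odot Cp_pos (Cq_rep q) (Cq_rep r)))
         (fun q r => Cq_pi (p_join Cp_pos (Cq_rep q) (Cq_rep r)))
         (fun q r => Cq_pi (p_meet Cp_pos (Cq_rep q) (Cq_rep r)))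
         Q0 Q1.

(* C' is a subalgebra of the reduct of the Chang algebra, hence positive, and
   theta is the kernel of the projection of C' onto the three classes, which
   the operations respect.  In the quotient the class [e] of the
   infinitesimals satisfies [e (+) e = e] and [e (.) e = 0].  In an
   MV-algebra, however, an element [a] with [a (+) a = a] is Boolean, so
   [a (.) a = a], and [a (.) a = 0] then forces [a = 0]: no embedding of
   C'/theta into an MV-algebra can keep [e] apart from [0]. *)

From mathcomp Require Import all_boot all_order all_algebra zify.

Section MVIdempotents.
Variables (A : Type) (s : mv_sig A).
Hypothesis mvA : MV_axioms s.

Lemma mv_oplusNl x : mv_oplus s (mv_neg s x) x = mv_one s.
Proof.
case: mvA => _ [oplusC [oplus0 [negK [oplus1 mv6]]]].
have := mv6 x (mv_one s).
by rewrite /mv_one oplus1 negK (oplusC (mv_zero s)) oplus0 => ->.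
Qed.

Lemma mv_idem_odot0_eq0 a :
  mv_oplus s a a = a -> mv_odot s a a = mv_zero s -> a = mv_zero s.
Proof.
case: mvA => _ [oplusC [oplus0 [negK [_ mv6]]]] idem nil.
have negaa : mv_oplus s (mv_neg s a) (mv_neg s a) = mv_one s.
  by rewrite /mv_one -nil /mv_odot negK.
have := mv6 (mv_neg s a) a; rewrite negK idem negaa mv_oplusNl.
rewrite /mv_one negK oplusC oplus0 => nega1.
by rewrite -(negK a) -nega1 negK.
Qed.

End MVIdempotents.

Lemma not_positive_of_idem_odot0 A (s : pos_sig A) e :
  p_oplus s e e = e -> p_odot s e e = p_zero s -> e <> p_zero s -> ~ is_positive s.
Proof.
move=> idem nil nz [M [f [f_inj [f_oplus [f_odot [_ [_ [f0 _]]]]]]]].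
apply/nz/f_inj; rewrite f0; apply: mv_idem_odot0_eq0; first exact: mv_ax.
- by have := f_oplus e e; rewrite idem => /= <-.
- by have := f_odot e e; rewrite nil f0 => /= <-.
Qed.

Lemma pos_congruence_kernel A B (s : pos_sig A) (t : pos_sig B) (f : A -> B)
    (th : A -> A -> Prop) :
  (forall x y, th x y <-> f x = f y) -> pos_hom s t f -> pos_congruence s th.
Proof.
move=> thE [f_oplus [f_odot [f_join [f_meet _]]]].
have compat op op' (f_op : forall x y, f (op x y) = op' (f x) (f y)) x x' y y' :
    th x x' -> th y y' -> th (op x y) (op x' y').
  by move=> /thE fx /thE fy; apply/thE; rewrite !f_op fx fy.
split; first by move=> x; apply/thE.
split; first by move=> x y /thE fxy; apply/thE.
split; first by move=> x y w /thE fxy /thE fyw; apply/thE; rewrite fxy.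
by split; [|split; [|split]]; apply: compat.
Qed.

Ltac solve_chang_op :=
  rewrite /chang_oplus /chang_neg /lex_trunc /lex_le /chang_of /=;
  repeat case: ifP => /=; move=> *; try (exfalso; lia); congr (_ _); lia.

Lemma chang_oplus_Eps_Eps a b : chang_oplus (Eps a) (Eps b) = Eps (a + b).
Proof. solve_chang_op. Qed.

Lemma chang_oplus_Eps_OneMinus a b :
  chang_oplus (Eps a) (OneMinus b) = OneMinus (b - a).
Proof. solve_chang_op. Qed.

Lemma chang_oplus_OneMinus_Eps a b :
  chang_oplus (OneMinus a) (Eps b) = OneMinus (a - b).
Proof. solve_chang_op. Qed.

Lemma chang_oplus_OneMinus_OneMinus a b :
  chang_oplus (OneMinus a) (OneMinus b) = OneMinus 0.
Proof. solve_chang_op. Qed.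

Lemma chang_neg_Eps n : chang_neg (Eps n) = OneMinus n.
Proof. solve_chang_op. Qed.

Lemma chang_neg_OneMinus n : chang_neg (OneMinus n) = Eps n.
Proof. solve_chang_op. Qed.

(* Simplifying these goes through the lexicographic integer arithmetic and
   blows up; from here on only the closed forms above are used. *)
Arguments chang_oplus : simpl never.
Arguments chang_neg : simpl never.

Definition chang_opsE :=
  (chang_oplus_Eps_Eps, chang_oplus_Eps_OneMinus, chang_oplus_OneMinus_Eps,
   chang_oplus_OneMinus_OneMinus, chang_neg_Eps, chang_neg_OneMinus).

Lemma chang_MV_axioms : MV_axioms chang_sig.
Proof.
rewrite /MV_axioms /=.
split; first by move=> [] a [] b [] c; rewrite !chang_opsE; congr (_ _); lia.
split; first by move=> [] a [] b; rewrite !chang_opsE; congr (_ _); lia.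
split; first by move=> [] a; rewrite !chang_opsE; congr (_ _); lia.
split; first by move=> [] a; rewrite !chang_opsE.
split; first by move=> [] a; rewrite !chang_opsE.
by move=> [] a [] b; rewrite !chang_opsE; congr (_ _); lia.
Qed.

Lemma chang_pos_oplusE x y : p_oplus chang_pos x y = chang_oplus x y.
Proof. by []. Qed.

Lemma chang_pos_odotE x y :
  p_odot chang_pos x y = chang_neg (chang_oplus (chang_neg x) (chang_neg y)).
Proof. by []. Qed.

Lemma chang_pos_joinE x y :
  p_join chang_pos x y = chang_oplus (p_odot chang_pos x (chang_neg y)) y.
Proof. by []. Qed.

Lemma chang_pos_meetE x y :
  p_meet chang_pos x y = chang_neg (p_join chang_pos (chang_neg x) (chang_neg y)).
Proof. by []. Qed.

Definition chang_posE :=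
  (chang_pos_meetE, chang_pos_joinE, chang_pos_odotE, chang_pos_oplusE).

Lemma in_Cp_cases c :
  in_Cp c -> [\/ c = Eps 0, exists n, c = Eps n.+1 | c = OneMinus 0].
Proof.
by case: c => [[|n]|[|n]] // _; [constructor 1 | constructor 2; exists n | constructor 3].
Qed.

Lemma in_Cp_ops x y : in_Cp x -> in_Cp y ->
  [/\ in_Cp (p_oplus chang_pos x y), in_Cp (p_odot chang_pos x y),
      in_Cp (p_join chang_pos x y) & in_Cp (p_meet chang_pos x y)].
Proof.
rewrite !chang_posE.
case/in_Cp_cases => [->|[a ->]|->]; case/in_Cp_cases => [->|[b ->]|->];
  by rewrite !chang_opsE; split => //=; lia.
Qed.

Lemma Cp_val_hom : pos_hom Cp_pos chang_pos val.
Proof.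
split; [|split; [|split; [|split]]]; try done;
  move=> x y; cbn [Cp_pos p_oplus p_odot p_join p_meet]; rewrite insubdK //;
  by case: (in_Cp_ops _ _ (valP x) (valP y)).
Qed.

Lemma Cp_positive : is_positive Cp_pos.
Proof. by exists (MvAlgebra chang_MV_axioms), val; split; [exact: val_inj | exact: Cp_val_hom]. Qed.

Definition chang_class (c : chang) : Cq :=
  match c with Eps 0 => Q0 | Eps _ => Qe | OneMinus _ => Q1 end.

Definition chang_rep (c : chang) : chang :=
  match c with Eps 0 => Eps 0 | Eps _ => Eps 1 | OneMinus _ => OneMinus 0 end.

Lemma Cq_piE x : Cq_pi x = chang_class (val x).
Proof. by []. Qed.

Lemma chang_class_Eps n : chang_class (Eps n) = if n == 0 then Q0 else Qe.
Proof. by case: n. Qed.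

Lemma val_Cq_rep_class c : val (Cq_rep (chang_class c)) = chang_rep c.
Proof. by case: c => [[|n]|n]. Qed.

Lemma chang_class_ops_rep x y : in_Cp x -> in_Cp y ->
  [/\ chang_class (p_oplus chang_pos x y)
        = chang_class (p_oplus chang_pos (chang_rep x) (chang_rep y)),
      chang_class (p_odot chang_pos x y)
        = chang_class (p_odot chang_pos (chang_rep x) (chang_rep y)),
      chang_class (p_join chang_pos x y)
        = chang_class (p_join chang_pos (chang_rep x) (chang_rep y))
    & chang_class (p_meet chang_pos x y)
        = chang_class (p_meet chang_pos (chang_rep x) (chang_rep y))].
Proof.
rewrite !chang_posE.
case/in_Cp_cases => [->|[a ->]|->]; case/in_Cp_cases => [->|[b ->]|->];
  cbn [chang_rep]; rewrite !chang_opsE ?chang_class_Eps; cbn [chang_class];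
  by split; repeat case: eqP => ?; first [done | exfalso; lia].
Qed.

Lemma Cq_pi_hom : pos_hom Cp_pos Cq_pos Cq_pi.
Proof.
have [v_oplus [v_odot [v_join [v_meet _]]]] := Cp_val_hom.
split; [|split; [|split; [|split]]]; try done;
  move=> x y; cbn [Cq_pos p_oplus p_odot p_join p_meet];
  rewrite !Cq_piE ?(v_oplus, v_odot, v_join, v_meet) !val_Cq_rep_class;
  by case: (chang_class_ops_rep _ _ (valP x) (valP y)).
Qed.

Lemma theta_iff x y : theta x y <-> Cq_pi x = Cq_pi y.
Proof.
rewrite /theta /Cq_pi; split.
  case=> [[-> ->]|[[n [m [n_gt0 [m_gt0 [-> ->]]]]]|[-> ->]]] //.
  by case: n n_gt0 => [|?] //; case: m m_gt0 => [|?].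
case/in_Cp_cases: (valP x) => [->|[a ->]|->];
  case/in_Cp_cases: (valP y) => [->|[b ->]|->] // _.
- by left.
- by right; left; exists a.+1, b.+1.
- by right; right.
Qed.

Lemma Cq_not_positive : ~ is_positive Cq_pos.
Proof.
have [pi_oplus [pi_odot _]] := Cq_pi_hom.
have [v_oplus [v_odot _]] := Cp_val_hom.
apply: (@not_positive_of_idem_odot0 _ _ (Cq_pi (Cq_rep Qe))) => //.
- by rewrite -pi_oplus Cq_piE v_oplus.
- by rewrite -pi_odot Cq_piE v_odot.
Qed.

Theorem mainTheorem8 :
  MV_axioms chang_sig /\
  (in_Cp (p_zero chang_pos) /\ in_Cp (p_one chang_pos) /\
   forall x y, in_Cp x -> in_Cp y ->
     [/\ in_Cp (p_oplus chang_pos x y), in_Cp (p_odot chang_pos x y),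
         in_Cp (p_join chang_pos x y) & in_Cp (p_meet chang_pos x y)]) /\
  is_positive Cp_pos /\
  pos_congruence Cp_pos theta /\
  (forall x y, theta x y <-> Cq_pi x = Cq_pi y) /\
  (forall q, exists x, Cq_pi x = q) /\
  pos_hom Cp_pos Cq_pos Cq_pi /\
  ~ is_positive Cq_pos.
Proof.
split; first exact: chang_MV_axioms.
split; first by split; [|split; [|exact: in_Cp_ops]].
split; first exact: Cp_positive.
split; first exact: pos_congruence_kernel theta_iff Cq_pi_hom.
split; first exact: theta_iff.
split; first by case; [exists Cp0 | exists (Cq_rep Qe) | exists Cp1].
split; first exact: Cq_pi_hom.
exact: Cq_not_positive.
Qed.
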